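(* Let $G$ be a block graph with at least one edge and let $H$ be a maximal co-interval subgraph of $G$. Then there exist a block $Q$ of $G$ and vertices $u,v\in V(Q)$ (possibly $u=v$) such that $E(H)=E(Q_{u,v}(G))$.
   Context: All graphs are finite and simple. A block of a graph is a maximal connected subgraph that has no cut-vertex of its own; a block graph is a graph in which every block is complete. For a vertex $x$, $N_G(x)$ is its neighbourhood and $\delta_G(x)$ its set of incident edges. For a clique $Q$ in $G$ and $u,v\in V(Q)$, the big ant $Q_{u,v}(G)=\big(V(Q)\cup N_G(u)\cup N_G(v),\ E(Q)\cup\delta_G(u)\cup\delta_G(v)\big)$. A graph $H$ is co-interval if there is a map $I$ from $V(H)$ to closed real intervals with $xy\in E(H)$ iff $I(x)\cap I(y)=\emptyset$ for distinct $x,y$. A co-interval subgraph $H$ of $G$ is maximal if there is no co-interval subgraph $H'$ of $G$ with $E(H)\subsetneq E(H')$ (maximality refers only to edge sets; isolated vertices are disregarded). *)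

From mathcomp Require Import all_boot.
From Stdlib Require Import Reals.

Set Implicit Arguments.
Unset Strict Implicit.
Unset Printing Implicit Defensive.

Section Graphs.
Variable T : finType.

Definition simple_graph (e : rel T) : Prop :=
  symmetric e /\ irreflexive e.

(* G[S] (induced subgraph on S) is connected (the empty graph counts as
   connected vacuously). *)
Definition connected_in (e : rel T) (S : {set T}) : Prop :=
  forall y z, y \in S -> z \in S ->
    connect [rel a b | [&& e a b, a \in S & b \in S]] y z.

Definition nonseparable (e : rel T) (S : {set T}) : Prop :=
  connected_in e S /\ forall x, x \in S -> connected_in e (S :\ x).

(* A block: a maximal (nonempty) connected subgraph without a cut-vertex.
   Maximal such subgraphs are induced, so they are determined by vertex sets. *)
Definition is_block (e : rel T) (B : {set T}) : Prop :=
  B != set0 /\ nonseparable e B /\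
  forall B' : {set T}, B \subset B' -> nonseparable e B' -> B' = B.

Definition is_clique (e : rel T) (Q : {set T}) : Prop :=
  forall x y, x \in Q -> y \in Q -> x != y -> e x y.

Definition block_graph (e : rel T) : Prop :=
  forall B, is_block e B -> is_clique e B.

Definition co_interval (V : {set T}) (E : rel T) : Prop :=
  exists I : T -> (R * R),
    (forall x, x \in V -> (fst (I x) <= snd (I x))%R) /\
    forall x y, x \in V -> y \in V -> x != y ->
      (E x y <-> ((snd (I x) < fst (I y))%R \/ (snd (I y) < fst (I x))%R)).

Definition subgraph (e : rel T) (V : {set T}) (E : rel T) : Prop :=
  symmetric E /\ (forall x y, E x y -> e x y) /\
  (forall x y, E x y -> x \in V /\ y \in V).

Definition co_interval_subgraph (e : rel T) (V : {set T}) (E : rel T) : Prop :=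
  subgraph e V E /\ co_interval V E.

(* Maximality refers only to edge sets. *)
Definition maximal_co_interval_subgraph (e : rel T) (V : {set T}) (E : rel T)
  : Prop :=
  co_interval_subgraph e V E /\
  ~ (exists (V' : {set T}) (E' : rel T), co_interval_subgraph e V' E' /\
       (forall x y, E x y -> E' x y) /\ (exists x y, E' x y /\ ~ E x y)).

Definition big_ant_edges (e : rel T) (Q : {set T}) (u v : T) : rel T :=
  fun x y => e x y &&
    ([&& x \in Q & y \in Q] || [|| x == u, x == v, y == u | y == v]).

End Graphs.

From Pilot Require Import Defs.
From mathcomp Require Import all_boot.
From Stdlib Require Import Reals Lra ClassicalDescription.

(* Take an interval representation of H, let a be the vertex whose interval
   ends first and b the one whose interval starts last.  If x y is an edge of H
   with the interval of x left of that of y, then a y and x b are edges of H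
   too, so unless x = a or y = b the vertices a, y, x, b span a 4-cycle of G;
   a 4-cycle sharing the two vertices a, b with the block Q through a b lies
   inside Q.  Hence E(H) is contained in E(Q_{a,b}(G)).  Conversely Q_{a,b}(G)
   is co-interval because Q is a clique, so maximality of H forces equality.
   If H has no edge, any block through an edge of G does the job. *)

Set Implicit Arguments.
Unset Strict Implicit.
Unset Printing Implicit Defensive.

Section Nonseparable.
Variables (T : finType) (e : rel T).
Hypothesis esym : symmetric e.

Local Notation adj_in S := [rel p q | [&& e p q, p \in S & q \in S]].

Lemma adj_in_sym (S : {set T}) : symmetric (adj_in S).
Proof. by move=> p q /=; rewrite esym [(p \in S) && _]andbC. Qed.

Lemma connect_in_edge (S : {set T}) p q :
  e p q -> p \in S -> q \in S -> connect (adj_in S) p q.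
Proof. by move=> epq pS qS; apply: connect1; rewrite /= epq pS qS. Qed.

Lemma connect_in_subset (S S' : {set T}) p q :
  S \subset S' -> connect (adj_in S) p q -> connect (adj_in S') p q.
Proof.
move=> sSS'; apply: connect_sub => u v /= /and3P [euv uS vS].
by apply: connect_in_edge; rewrite // (subsetP sSS').
Qed.

Lemma connected_in_star (S : {set T}) c :
  c \in S -> (forall z, z \in S -> connect (adj_in S) c z) -> connected_in e S.
Proof.
move=> cS cS_conn y z yS zS; apply: connect_trans (cS_conn z zS).
by rewrite (sym_connect_sym (adj_in_sym S)); apply: cS_conn.
Qed.

Lemma connected_in_setU (A B : {set T}) c :
  connected_in e A -> connected_in e B -> c \in A -> c \in B ->
  connected_in e (A :|: B).
Proof.
move=> connA connB cA cB; apply: (@connected_in_star _ c); first by rewrite inE cA.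
move=> z; rewrite inE => /orP [zA | zB].
- by apply: (connect_in_subset (subsetUl A B)); apply: connA.
- by apply: (connect_in_subset (subsetUr A B)); apply: connB.
Qed.

Lemma connected_in_set1 p : connected_in e [set p].
Proof. by move=> y z; rewrite !inE => /eqP -> /eqP ->. Qed.

Lemma connected_in_set2 p q : e p q -> connected_in e [set p; q].
Proof.
move=> epq; apply: (@connected_in_star _ p); first by rewrite !inE eqxx.
move=> z; rewrite !inE => /orP [] /eqP -> //.
by apply: connect_in_edge; rewrite ?inE ?eqxx ?orbT.
Qed.

Lemma connected_in_path3 p q r : e p q -> e q r -> connected_in e [set p; q; r].
Proof.
move=> epq eqr; apply: (@connected_in_star _ q); first by rewrite !inE eqxx orbT.
move=> z; rewrite !inE -orbA => /or3P [] /eqP -> //;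
  by apply: connect_in_edge; rewrite ?inE ?eqxx ?orbT // esym.
Qed.

Lemma nonseparable_connected_setD1 (A : {set T}) w :
  nonseparable e A -> connected_in e (A :\ w).
Proof.
move=> [connA connAD1]; have [wA | wNA] := boolP (w \in A); first exact: connAD1.
by rewrite (setDidPl _) // disjoint_sym disjoints1.
Qed.

Lemma nonseparable_setU (A B : {set T}) p q :
  nonseparable e A -> nonseparable e B -> p != q ->
  p \in A -> p \in B -> q \in A -> q \in B -> nonseparable e (A :|: B).
Proof.
move=> nsA nsB pq pA pB qA qB; split; first exact: connected_in_setU nsA.1 nsB.1 pA pB.
move=> w _; rewrite setDUl.
have [c cA cB] : exists2 c, c \in A :\ w & c \in B :\ w.
  case: (eqVneq w p) => [-> | wp]; [exists q | exists p];
    by rewrite !inE 1?eq_sym ?pA ?pB ?qA ?qB ?andbT.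
by apply: connected_in_setU cA cB; apply: nonseparable_connected_setD1.
Qed.

Lemma nonseparable_edge p q : e p q -> p != q -> nonseparable e [set p; q].
Proof.
move=> epq pq; split=> [|w]; first exact: connected_in_set2.
rewrite !inE => /orP [] /eqP ->; first by rewrite setU1K ?inE //; apply: connected_in_set1.
by rewrite setUC setU1K ?inE 1?eq_sym //; apply: connected_in_set1.
Qed.

Lemma set4_rot (a y x b : T) : [set a; y; x; b] = [set y; x; b; a].
Proof. by rewrite [RHS]setUC !setUA. Qed.

Lemma connected_in_set4D1 a y x b :
  a != y -> a != x -> a != b -> e y x -> e x b ->
  connected_in e ([set a; y; x; b] :\ a).
Proof.
move=> ay ax ab eyx exb.
rewrite -!setUA setU1K ?inE ?negb_or ?ay ?ax ?ab // !setUA.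
exact: connected_in_path3.
Qed.

Lemma nonseparable_cycle4 a y x b :
  a != y -> a != x -> a != b -> y != x -> y != b -> x != b ->
  e a y -> e y x -> e x b -> e b a -> nonseparable e [set a; y; x; b].
Proof.
move=> ay ax ab yx yb xb eay eyx exb eba; split.
  have -> : [set a; y; x; b] = [set a; y; x] :|: [set x; b; a].
    by apply/setP => z; rewrite !inE; case: (z == a); case: (z == x); rewrite /= ?orbT ?orbF.
  by apply: (@connected_in_setU _ _ x); rewrite ?inE ?eqxx ?orbT //;
    apply: connected_in_path3.
move=> w; rewrite !inE -!orbA => /or4P [] /eqP ->.
- exact: connected_in_set4D1.
- by rewrite set4_rot; apply: connected_in_set4D1; rewrite // eq_sym.
- by rewrite 2!set4_rot; apply: connected_in_set4D1; rewrite // eq_sym.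
- by rewrite 3!set4_rot; apply: connected_in_set4D1; rewrite // eq_sym.
Qed.

Lemma exists_block_edge a b :
  e a b -> a != b -> exists Q, [/\ is_block e Q, a \in Q & b \in Q].
Proof.
move=> eab ab.
pose nonsep := [pred S : {set T} | excluded_middle_informative (nonseparable e S)].
have nonsep_ab : nonsep [set a; b] by apply/sumboolP; exact: nonseparable_edge.
have [Q /maxsetP [/sumboolP nsQ maxQ] abQ] := maxset_exists nonsep_ab.
have [aQ bQ] : a \in Q /\ b \in Q by rewrite !(subsetP abQ) // !inE eqxx ?orbT.
exists Q; split=> //; split; first by apply/set0Pn; exists a.
by split=> // B QB nsB; apply: maxQ => //; apply/sumboolP.
Qed.

Lemma block_absorbs (Q C : {set T}) p q :
  is_block e Q -> nonseparable e C -> p != q ->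
  p \in Q -> q \in Q -> p \in C -> q \in C -> C \subset Q.
Proof.
move=> [_ [nsQ maxQ]] nsC pq pQ qQ pC qC.
by rewrite -(maxQ _ (subsetUl Q C) (nonseparable_setU nsQ nsC pq pQ pC qQ qC)) subsetUr.
Qed.

End Nonseparable.

Section BigAnt.
Variables (T : finType) (e : rel T).
Hypothesis esym : symmetric e.
Variables (Q : {set T}) (a b : T).
Hypotheses (Qclique : is_clique e Q) (aQ : a \in Q) (bQ : b \in Q) (ab : a != b).

Local Notation ant := (big_ant_edges e Q a b).

Lemma big_ant_edges_sym : symmetric ant.
Proof.
move=> x y; rewrite /big_ant_edges esym; congr (_ && (_ || _)); first exact: andbC.
by rewrite orbA orbC !orbA.
Qed.

Lemma big_ant_edgesEl z : ant a z = e a z.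
Proof. by rewrite /big_ant_edges eqxx orbT andbT. Qed.

Lemma big_ant_edgesEr z : ant b z = e b z.
Proof. by rewrite /big_ant_edges eqxx !orbT andbT. Qed.

Lemma big_ant_edgesE x y : x != a -> x != b -> y != a -> y != b -> x != y ->
  ant x y = (x \in Q) && (y \in Q).
Proof.
move=> xa xb ya yb xy.
rewrite /big_ant_edges !(negbTE xa, negbTE xb, negbTE ya, negbTE yb) /= orbF.
by case xQ: (x \in Q); case yQ: (y \in Q); rewrite ?andbF //= andbT; apply: Qclique.
Qed.

Let N := INR #|T|.
Let rank (z : T) := INR (enum_rank z).

(* a and b are points at the two ends and the other vertices of Q are distinct
   points in between; every other vertex gets an interval covering all of
   these points except a (resp. b) when it is adjacent to a (resp. b). *)
Definition ant_interval z : R * R :=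
  if z == a then (-1, -1)%R
  else if z == b then (N + 1, N + 1)%R
  else if z \in Q then (rank z, rank z)
  else ((if e z a then -1/2 else -2)%R, (if e z b then N + 1/2 else N + 2)%R).

Local Notation I := ant_interval.

Lemma rank_bounds z : (0 <= rank z /\ rank z + 1 <= N)%R.
Proof.
split; first exact: pos_INR.
by rewrite /rank /N -S_INR; apply/le_INR/leP; apply: ltn_ord.
Qed.

Lemma rank_inj : injective rank.
Proof. by move=> y z /INR_eq /val_inj /enum_rank_inj. Qed.

Lemma ant_interval_lo_a z : z != a -> (-1 < fst (I z))%R <-> e a z.
Proof.
move=> za; have [r0 _] := rank_bounds z; rewrite /I (negbTE za).
case: eqVneq => [-> | zb] /=.
  by have := pos_INR #|T|; rewrite /N; split=> _; [apply: Qclique | lra].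
case: ifP => zQ /=; first by split=> _; [apply: Qclique; rewrite // eq_sym | lra].
by rewrite esym; case: (e a z); split=> //; lra.
Qed.

Lemma ant_interval_bounds z :
  (-1 <= snd (I z) /\ fst (I z) <= snd (I z) /\ fst (I z) <= N + 1)%R.
Proof.
have [r0 r1] := rank_bounds z; have := pos_INR #|T|; rewrite /I -/N.
case: ifP => _ /=; first lra.
case: ifP => _ /=; first lra.
case: ifP => _ /=; first lra.
by case: (e z a); case: (e z b); lra.
Qed.

Lemma ant_interval_hi_b z : z != b -> (snd (I z) < N + 1)%R <-> e b z.
Proof.
move=> zb; have [_ r1] := rank_bounds z; have := pos_INR #|T|; rewrite /I -/N.
case: eqVneq => [-> | za] /=.
  by split=> _; [apply: Qclique; rewrite // eq_sym | lra].
rewrite (negbTE zb); case: ifP => zQ /=.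
  by split=> _; [apply: Qclique; rewrite // eq_sym | lra].
by rewrite esym; case: (e b z); split=> //; lra.
Qed.

Lemma ant_interval_Q z : z != a -> z != b -> z \in Q -> I z = (rank z, rank z).
Proof. by move=> za zb zQ; rewrite /I (negbTE za) (negbTE zb) zQ. Qed.

Lemma ant_interval_out z : z != a -> z != b -> z \notin Q ->
  (fst (I z) <= -1/2 /\ N + 1/2 <= snd (I z))%R.
Proof.
move=> za zb zQ; rewrite /I (negbTE za) (negbTE zb) (negbTE zQ) /=.
by case: (e z a); case: (e z b); lra.
Qed.

Lemma ant_interval_in z : z != a -> z != b ->
  (fst (I z) < N + 1/2 /\ -1/2 < snd (I z))%R.
Proof.
move=> za zb; have [r0 r1] := rank_bounds z; have := pos_INR #|T|; rewrite -/N => N0.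
have [zQ | zNQ] := boolP (z \in Q); first by rewrite ant_interval_Q //=; lra.
have := ant_interval_out za zb zNQ; lra.
Qed.

Local Notation disjoint_iv p q := (snd p < fst q \/ snd q < fst p)%R.

Lemma ant_interval_disjointEl z : z != a -> ant a z <-> disjoint_iv (I a) (I z).
Proof.
move=> za; rewrite big_ant_edgesEl /I eqxx /= -/(I z).
by have := ant_interval_bounds z; have := ant_interval_lo_a za; intuition lra.
Qed.

Lemma ant_interval_disjointEr z : z != b -> ant b z <-> disjoint_iv (I b) (I z).
Proof.
move=> zb; rewrite big_ant_edgesEr /I eqxx eq_sym (negbTE ab) /= -/(I z).
by have := ant_interval_bounds z; have := ant_interval_hi_b zb; intuition lra.
Qed.

Lemma ant_interval_disjointE x y : x != a -> x != b -> y != a -> y != b -> x != y ->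
  ant x y <-> disjoint_iv (I x) (I y).
Proof.
move=> xa xb ya yb xy; rewrite big_ant_edgesE //.
have [xQ | xNQ] := boolP (x \in Q); last first.
  by have := ant_interval_out xa xb xNQ; have := ant_interval_in ya yb; split=> //; lra.
have [yQ | yNQ] := boolP (y \in Q); last first.
  by have := ant_interval_out ya yb yNQ; have := ant_interval_in xa xb; split=> //; lra.
rewrite !ant_interval_Q //=; split=> // _.
have [lt | [/rank_inj eq_xy | gt]] := Rtotal_order (rank x) (rank y).
- by left.
- by rewrite eq_xy eqxx in xy.
- by right.
Qed.

Lemma big_ant_co_interval : co_interval_subgraph e setT ant.
Proof.
split.
  split; first exact: big_ant_edges_sym.
  by split=> [x y /andP [] | x y _]; rewrite ?inE.
exists I; split=> [z _ | x y _ _].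
  by have := ant_interval_bounds z; lra.
case: (eqVneq x a) => [-> | xa] xy.
  by apply: (@ant_interval_disjointEl y); rewrite eq_sym.
case: (eqVneq y a) => [-> | ya].
  by have := ant_interval_disjointEl xa; rewrite big_ant_edges_sym; tauto.
move: xy; case: (eqVneq x b) => [-> | xb] xy.
  by apply: (@ant_interval_disjointEr y); rewrite eq_sym.
case: (eqVneq y b) => [-> | yb].
  by have := ant_interval_disjointEr xb; rewrite big_ant_edges_sym; tauto.
exact: ant_interval_disjointE.
Qed.

End BigAnt.

Lemma big_ant_edges_of_cycle4 (T : finType) (e : rel T) (Q : {set T}) a b x y :
  symmetric e -> irreflexive e -> is_block e Q -> a \in Q -> b \in Q ->
  e a b -> e x y -> e a y -> e x b -> big_ant_edges e Q a b x y.
Proof.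
move=> esym eirr Qblock aQ bQ eab exy eay exb; rewrite /big_ant_edges exy /=.
have [-> | xa] := eqVneq x a; first by rewrite orbT.
have [-> | yb] := eqVneq y b; first by rewrite !orbT.
have neq u v : e u v -> u != v by apply: contraTneq => ->; rewrite eirr.
have eyx : e y x by rewrite esym.
have eba : e b a by rewrite esym.
have ax : a != x by rewrite eq_sym.
have C4 := nonseparable_cycle4 esym (neq _ _ eay) ax (neq _ _ eab) (neq _ _ eyx) yb
  (neq _ _ exb) eay eyx exb eba.
have /subsetP C4Q : [set a; y; x; b] \subset Q.
  by apply: (block_absorbs esym Qblock C4 (neq _ _ eab)); rewrite // !inE eqxx ?orbT.
by rewrite !C4Q // !inE eqxx ?orbT.
Qed.

Lemma seq_argmin (A : eqType) (f : A -> R) (s : seq A) x :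
  x \in s -> exists2 m, m \in s & forall z, z \in s -> (f m <= f z)%R.
Proof.
elim: s x => // h t IH x _.
have [m mht minm] : exists2 m, m \in h :: t & forall z, z \in t -> (f m <= f z)%R.
  case: t IH => [|h' t] IH; first by exists h; rewrite ?mem_head.
  by have [m mt minm] := IH h' (mem_head _ _); exists m; rewrite // inE mt orbT.
have [fh | fm] := Rle_lt_dec (f h) (f m).
  exists h; rewrite ?mem_head // => z /predU1P [-> | zt]; first lra.
  by have := minm z zt; lra.
by exists m => // z /predU1P [-> | zt]; [lra | exact: minm].
Qed.

(* A bare [co_interval] would resolve to the one exported by Stdlib's Reals. *)
Lemma co_interval_extremal_edge (T : finType) (V : {set T}) (E : rel T) (x1 y1 : T) :
  Defs.co_interval V E -> (forall x y, E x y -> x \in V /\ y \in V) -> irreflexive E ->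
  E x1 y1 -> exists a b, E a b /\
    forall x y, E x y -> (E a y && E x b) || (E a x && E y b).
Proof.
move=> [I [Iproper Irepr]] EV Eirr E1x1y1.
have oriented x y : E x y -> (snd (I x) < fst (I y) \/ snd (I y) < fst (I x))%R.
  move=> Exy; have [xV yV] := EV _ _ Exy; apply/(Irepr x y xV yV) => //.
  by apply: contraTneq Exy => ->; rewrite Eirr.
have left_edge x y : x \in V -> y \in V -> (snd (I x) < fst (I y))%R -> E x y.
  move=> xV yV lt; have xy : x != y.
    by apply/eqP => xy; rewrite xy in lt; have := Iproper y yV; lra.
  by apply/(Irepr x y xV yV xy); left.
have [x1V y1V] := EV _ _ E1x1y1.
have argmin (f : T -> R) :
    exists2 m, m \in V & forall z, z \in V -> (f m <= f z)%R.
  have x1V' : x1 \in enum V by rewrite mem_enum.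
  have [m] := seq_argmin f x1V'; rewrite mem_enum => mV minm.
  by exists m => // z; rewrite -mem_enum; apply: minm.
have [a aV mina] := argmin (fun z => snd (I z)).
have [b bV maxb] := argmin (fun z => - fst (I z))%R.
have extremal x y : x \in V -> y \in V -> (snd (I x) < fst (I y))%R -> E a y && E x b.
  move=> xV yV lt; have := mina x xV; have := maxb y yV => ? ?.
  by apply/andP; split; apply: left_edge => //; lra.
exists a, b; split.
  apply: left_edge => //; have := mina x1 x1V; have := mina y1 y1V.
  by have := maxb x1 x1V; have := maxb y1 y1V; case: (oriented _ _ E1x1y1); lra.
move=> x y Exy; have [xV yV] := EV _ _ Exy.
by case: (oriented _ _ Exy) => lt; [rewrite extremal | rewrite (extremal y x) ?orbT].
Qed.

Lemma maximal_co_interval_big_ant (T : finType) (e : rel T) (V Q : {set T})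
    (E : rel T) a b :
  symmetric e -> maximal_co_interval_subgraph e V E ->
  is_clique e Q -> a \in Q -> b \in Q -> a != b ->
  (forall x y, E x y -> big_ant_edges e Q a b x y) ->
  forall x y, E x y <-> big_ant_edges e Q a b x y.
Proof.
move=> esym [_ maxE] Qclique aQ bQ ab E_ant x y; split=> [| ant_xy]; first exact: E_ant.
apply/negPn/negP => NExy; apply: maxE; exists setT, (big_ant_edges e Q a b).
split; first exact: big_ant_co_interval.
by split=> //; exists x, y; split=> //; apply/negP.
Qed.

Theorem lemma10 (T : finType) (e : rel T) (V : {set T}) (E : rel T) :
  simple_graph e -> block_graph e -> (exists x y, e x y) ->
  maximal_co_interval_subgraph e V E ->
  exists (Q : {set T}) (u v : T),
    is_block e Q /\ u \in Q /\ v \in Q /\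
    forall x y, E x y <-> big_ant_edges e Q u v x y.
Proof.
move=> [esym eirr] blockG [x0 [y0 e_x0y0]] maxE.
have [[[symE [Ee EV]] ciE] _] := maxE.
have e_neq u v : e u v -> u != v by apply: contraTneq => ->; rewrite eirr.
suff [Q [a [b [Qblock aQ bQ ab E_ant]]]] : exists Q a b,
    [/\ is_block e Q, a \in Q, b \in Q, a != b &
         forall x y, E x y -> big_ant_edges e Q a b x y].
  exists Q, a, b; do 3!split=> //.
  exact: maximal_co_interval_big_ant esym maxE (blockG Q Qblock) aQ bQ ab E_ant.
case: (pickP (fun p : T * T => E p.1 p.2)) => [[x1 y1] /= E_x1y1 | noE]; last first.
  have [Q [Qblock x0Q y0Q]] := exists_block_edge esym e_x0y0 (e_neq _ _ e_x0y0).
  exists Q, x0, y0; split=> //; first exact: e_neq.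
  by move=> x y Exy; have := noE (x, y); rewrite /= Exy.
have Eirr : irreflexive E by move=> x; apply/negbTE/negP => /Ee; rewrite eirr.
have [a [b [Eab extremal]]] := co_interval_extremal_edge ciE EV Eirr E_x1y1.
have [Q [Qblock aQ bQ]] := exists_block_edge esym (Ee _ _ Eab) (e_neq _ _ (Ee _ _ Eab)).
exists Q, a, b; split=> //; first exact: e_neq (Ee _ _ Eab).
move=> x y Exy; case/orP: (extremal x y Exy) => /andP [Eay Exb].
  exact: big_ant_edges_of_cycle4 (Ee _ _ Eab) (Ee _ _ Exy) (Ee _ _ Eay) (Ee _ _ Exb).
rewrite big_ant_edges_sym //; apply: big_ant_edges_of_cycle4 => //; apply: Ee => //.
by rewrite symE.
Qed.
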